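(* Let $q=p^h$ with $p$ an odd prime, and let $a,b,c\in{\rm GF}(q)$ be such that the polynomial $X^3+aX^2+bX+c$ is irreducible over ${\rm GF}(q)$. For $r,s,t\in{\rm GF}(q)$ let $$M_{r,s,t}=\begin{pmatrix}1&0&r&r^2-ar+s&t\\0&1&s&2rs-t&s^2+bs-cr\\0&0&1&2r&2s\\0&0&0&1&0\\0&0&0&0&1\end{pmatrix}.$$ Then $G=\{M_{r,s,t} : r,s,t\in{\rm GF}(q)\}$ is a group (under matrix multiplication) which is a $p$-group of order $q^3$. *)

From HB Require Import structures.
From mathcomp Require Import all_boot all_order all_algebra all_fingroup all_solvable.
Set Implicit Arguments. Unset Strict Implicit. Unset Printing Implicit Defensive.
Import GRing.Theory.
Local Open Scope ring_scope.

Definition Mrst (F : fieldType) (a b c r s t : F) : 'M[F]_5 :=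
  \matrix_(i < 5, j < 5)
    nth 0 (nth [::]
      [:: [:: 1; 0; r; r ^+ 2 - a * r + s; t];
          [:: 0; 1; s; 2 * r * s - t; s ^+ 2 + b * s - c * r];
          [:: 0; 0; 1; 2 * r; 2 * s];
          [:: 0; 0; 0; 1; 0];
          [:: 0; 0; 0; 0; 1]] i) j.

Definition Gmx (F : finFieldType) (a b c : F) : {set 'M[F]_5} :=
  [set Mrst a b c x.1.1 x.1.2 x.2 | x : F * F * F].

Definition GGL (F : finFieldType) (a b c : F) : {set {'GL_5[F]}} :=
  [set g : {'GL_5[F]} | GLval g \in Gmx a b c].

From HB Require Import structures.
From mathcomp Require Import all_boot all_order all_algebra all_fingroup all_solvable.
From mathcomp Require Import ring.
Import GRing.Theory.
Local Open Scope ring_scope.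

(* The matrices compose by (r, s, t) * (r', s', t') = (r + r', s + s', t + t' + 2 r s'),
   so G is the image of a group law on F^3 and has q^3 elements; being a subgroup
   of GL_5 of order p^(3h), it is a p-group. *)

Section MrstAlgebra.

Variables (F : fieldType) (a b c : F).

Lemma Mrst_mul (r s t r' s' t' : F) :
  Mrst a b c r s t *m Mrst a b c r' s' t' =
  Mrst a b c (r + r') (s + s') (t + t' + 2 * r * s').
Proof.
apply/matrixP => i j; rewrite !mxE !big_ord_recl big_ord0 !mxE /=.
case: i => [[|[|[|[|[|i]]]]] i_lt5] //=; case: j => [[|[|[|[|[|j]]]]] j_lt5] //=;
  rewrite /bump /=; ring.
Qed.

Lemma Mrst0 : Mrst a b c 0 0 0 = 1%:M.
Proof.
apply/matrixP => i j; rewrite !mxE.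
case: i => [[|[|[|[|[|i]]]]] i_lt5] //=; case: j => [[|[|[|[|[|j]]]]] j_lt5] //=;
  ring.
Qed.

Lemma Mrst_mulV (r s t : F) :
  Mrst a b c r s t *m Mrst a b c (- r) (- s) (2 * r * s - t) = 1%:M.
Proof. by rewrite Mrst_mul -Mrst0; congr Mrst; ring. Qed.

Lemma Mrst_unit (r s t : F) : Mrst a b c r s t \in unitmx.
Proof. by case: (mulmx1_unit (Mrst_mulV r s t)). Qed.

Lemma Mrst_inj (r s t r' s' t' : F) :
  Mrst a b c r s t = Mrst a b c r' s' t' -> (r, s, t) = (r', s', t').
Proof.
move=> eqM; have entry i j := congr1 (fun M : 'M[F]_5 => M i j) eqM.
move: (entry 0 2%:R) (entry 1 2%:R) (entry 0 4%:R); rewrite !mxE /=.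
by move=> -> -> ->.
Qed.

End MrstAlgebra.

Lemma card_GL_preimset (F : finFieldType) (n : nat) (A : {set 'M[F]_n.+1}) :
  A \subset unitmx -> #|[set g : {'GL_n.+1[F]} | GLval g \in A]| = #|A|.
Proof.
move=> sAunit; rewrite -(card_imset _ (@val_inj _ _ {'GL_n.+1[F]})).
congr (#|pred_of_set _|); apply/setP => M; apply/imsetP/idP => [[g]|AM].
  by rewrite inE => Ag ->.
by exists (Sub M (subsetP sAunit M AM) : {'GL_n.+1[F]}); rewrite ?inE.
Qed.

Section TheGroup.

Variables (F : finFieldType) (a b c : F).

Lemma Gmx_sub_unitmx : Gmx a b c \subset unitmx.
Proof. by apply/subsetP => M /imsetP [x _ ->]; exact: Mrst_unit. Qed.

Lemma card_Gmx : #|Gmx a b c| = (#|F| ^ 3)%N.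
Proof.
rewrite card_imset; first by rewrite !card_prod !expnS expn0 muln1 mulnA.
by move=> [[r s] t] [[r' s'] t'] /Mrst_inj.
Qed.

Lemma card_GGL : #|GGL a b c| = (#|F| ^ 3)%N.
Proof. by rewrite card_GL_preimset ?card_Gmx ?Gmx_sub_unitmx. Qed.

Lemma group_set_GGL : group_set (GGL a b c).
Proof.
apply/group_setP; split.
  by rewrite inE GL_1E; apply/imsetP; exists (0, 0, 0); rewrite ?Mrst0.
move=> g h; rewrite !inE GL_MxE.
move=> /imsetP [[[r s] t] _ ->] /imsetP [[[r' s'] t'] _ ->].
by rewrite Mrst_mul; apply/imsetP; exists (r + r', s + s', t + t' + 2 * r * s').
Qed.

End TheGroup.

Theorem lemma2p1 (F : finFieldType) (p h : nat) (a b c : F) :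
  prime p -> odd p -> #|F| = (p ^ h)%N ->
  irreducible_poly ('X^3 + a%:P * 'X^2 + b%:P * 'X + c%:P) ->
  [/\ Gmx a b c \subset unitmx,
      group_set (GGL a b c),
      #|Gmx a b c| = (#|F| ^ 3)%N,
      #|GGL a b c| = (#|F| ^ 3)%N
    & (p.-group (GGL a b c))%g].
Proof.
move=> p_prime _ cardF _.
split; [exact: Gmx_sub_unitmx | exact: group_set_GGL | exact: card_Gmx
       | exact: card_GGL | ].
by rewrite /pgroup card_GGL cardF -expnM pnatX pnat_id.
Qed.
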